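(* Let $Z$ be a random variable with values in a Polish space $\mathcal{Z}$ and $\mathbb{F}=(\mathcal{F}_t)_{t\ge0}$ a filtration with $\mathcal{F}_t\subset\sigma(Z)$ for all $t\ge0$. If $\tau$ is an $(\mathbb{F}_+,Z)$-randomized stopping time, then there exists a sequence of $(\mathbb{F},Z)$-randomized stopping times $\tau_n$ such that $(Z,\tau_n)\to(Z,\tau)$ in law in $\mathcal{Z}\times[0,\infty]$.
   Context: A random time is a $[0,\infty]$-valued random variable $\tau$; $\mathcal{F}^\tau_t=\sigma(\{\tau\le s\}:s\le t)$. For a filtration $\mathbb{G}$ with $\mathcal{G}_t\subset\sigma(Z)$, $\tau$ is a $(\mathbb{G},Z)$-randomized stopping time if $\mathcal{F}^\tau_t$ is conditionally independent of $Z$ given $\mathcal{G}_t$ for every $t\ge0$, equivalently $\mathbb{P}(\tau\le t\mid Z)=\mathbb{P}(\tau\le t\mid\mathcal{G}_t)$ a.s. for every $t$. $\mathbb{F}_+=(\mathcal{F}_{t+})$ with $\mathcal{F}_{t+}=\bigcap_{s>t}\mathcal{F}_s$. *)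

From mathcomp Require Import all_boot all_order all_algebra all_classical all_reals all_analysis measurable_realfun.
Set Implicit Arguments. Unset Strict Implicit. Unset Printing Implicit Defensive.
Import Order.TTheory GRing.Theory Num.Theory numFieldNormedType.Exports.
Local Open Scope classical_set_scope.
Local Open Scope ring_scope.

(* A Polish space: represented as a separable, Hausdorff, complete metric
   space (every Polish space carries such a compatible complete metric, and
   the statement only depends on the topology). *)
Definition polish_space (R : realType) (S : completePseudoMetricType R) : Prop :=
  hausdorff_space S /\ exists D : set S, countable D /\ dense D.

Definition borel_sets (S : topologicalType) : set (set S) := <<s open >>.
Arguments borel_sets S : clear implicits.

Definition sigma_gen (Omega S : Type) (B : set (set S)) (Z : Omega -> S)
  : set (set Omega) := [set A | exists2 C, B C & A = Z @^-1` C].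

Definition measurable_wrt (d : measure_display) (Omega : measurableType d)
  (R : realType) (G : set (set Omega)) (g : Omega -> R) : Prop :=
  forall U : set R, measurable U -> G (g @^-1` U).

Definition is_cond_exp (d : measure_display) (Omega : measurableType d)
  (R : realType) (P : probability Omega R) (G : set (set Omega))
  (X g : Omega -> R) : Prop :=
  [/\ measurable_wrt G g,
      P.-integrable setT (EFin \o g) &
      forall B, G B ->
        (\int[P]_(w in B) (X w)%:E = \int[P]_(w in B) (g w)%:E)%E].

Definition filtration_in (d : measure_display) (Omega : measurableType d)
  (R : realType) (SZ : set (set Omega)) (F : R -> set (set Omega)) : Prop :=
  (forall t, 0 <= t -> sigma_algebra setT (F t)) /\
  (forall s t, 0 <= s -> s <= t -> F s `<=` F t) /\
  (forall t, 0 <= t -> F t `<=` SZ).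

Definition filt_plus (Omega : Type) (R : realType) (F : R -> set (set Omega))
  : R -> set (set Omega) := fun t => [set A | forall s, t < s -> F s A].

Definition random_time (d : measure_display) (Omega : measurableType d)
  (R : realType) (tau : Omega -> \bar R) : Prop :=
  measurable_fun setT tau /\ (forall w, (0 <= tau w)%E).

Definition randomized_stopping_time (d : measure_display)
  (Omega : measurableType d) (R : realType) (P : probability Omega R)
  (SZ : set (set Omega)) (G : R -> set (set Omega)) (tau : Omega -> \bar R)
  : Prop :=
  random_time tau /\
  forall t : R, 0 <= t ->
    forall g1 g2 : Omega -> R,
      is_cond_exp P SZ (\1_[set w | (tau w <= t%:E)%E]) g1 ->
      is_cond_exp P (G t) (\1_[set w | (tau w <= t%:E)%E]) g2 ->
      ae_eq P setT (EFin \o g1) (EFin \o g2).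

Definition cvg_law_pair (d : measure_display) (Omega : measurableType d)
  (R : realType) (P : probability Omega R) (S : topologicalType)
  (Z : Omega -> S) (taun : nat -> Omega -> \bar R) (tau : Omega -> \bar R)
  : Prop :=
  forall f : S * \bar R -> R,
    {within [set p : S * \bar R | (0 <= p.2)%E], continuous f} ->
    (exists M : R, forall p : S * \bar R, (0 <= p.2)%E -> `|f p| <= M) ->
    (fun n => Rintegral P setT (fun w => f (Z w, taun n w)))
      @ \oo --> Rintegral P setT (fun w => f (Z w, tau w)).

(* Shifting by a constant c > 0 turns an (F_+, Z)-randomized stopping time tau
   into an (F, Z)-randomized one: {tau + c <= t} = {tau <= t - c}, and
   F_{(t-c)+} is contained in F_t, itself contained in sigma(Z).  A version of
   P(tau <= t - c | F_{(t-c)+}) is by assumption also a version of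
   P(tau <= t - c | sigma(Z)); being F_t-measurable, it is then a version of
   P(tau <= t - c | F_t) as well.  The times tau + 1/(n+1) decrease to tau
   pointwise, so E f(Z, tau_n) -> E f(Z, tau) for bounded f continuous on
   S x [0, +oo] by dominated convergence. *)

From HB Require Import structures.
From mathcomp Require Import lra.
From mathcomp Require Import all_boot all_order all_algebra all_classical all_reals all_analysis measurable_realfun.
Import Order.TTheory GRing.Theory Num.Theory numFieldNormedType.Exports.
Local Open Scope classical_set_scope.
Local Open Scope ring_scope.

Section conditional_expectation.
Context {d} {Omega : measurableType d} {R : realType} (P : probability Omega R)
  {G : set (set Omega)}.
Hypotheses (G_sigma : sigma_algebra setT G) (G_measurable : G `<=` measurable).

(* Conditional expectations given G are handled as Radon-Nikodym derivatives on
   Omega re-equipped with the sigma-algebra G, under the image of P by the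
   identity. *)
Local Notation OmegaG := (g_sigma_algebraType G).

Let measurable_OmegaGE : (measurable : set (set OmegaG)) = G.
Proof. exact: measurable_g_measurableTypeE. Qed.

Lemma measurable_coarse {B : set OmegaG} : measurable B -> d.-measurable B.
Proof. by rewrite measurable_OmegaGE; exact: G_measurable. Qed.

Definition coarse_id : Omega -> OmegaG := id.

Lemma measurable_coarse_id : measurable_fun setT coarse_id.
Proof. by move=> _ B mB; rewrite setTI; exact: measurable_coarse. Qed.

HB.instance Definition _ :=
  isMeasurableFun.Build _ _ _ _ coarse_id measurable_coarse_id.

Let PG := distribution P coarse_id.

Let ge0_integral_PG (h : OmegaG -> \bar R) (E : set OmegaG) :
  measurable E -> measurable_fun setT h -> (forall w, 0 <= h w)%E ->
  (\int[PG]_(w in E) h w = \int[P]_(w in E) h w)%E.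
Proof.
by move=> mE mh h0; rewrite ge0_integral_pushforward//; exact: measurable_funTS.
Qed.

Let integral_PG (h : OmegaG -> \bar R) (E : set OmegaG) :
  measurable E -> measurable_fun setT h -> P.-integrable E h ->
  (\int[PG]_(w in E) h w = \int[P]_(w in E) h w)%E.
Proof. by move=> mE mh ih; rewrite integral_pushforward. Qed.

Lemma measurable_wrtE (g : Omega -> R) :
  measurable_wrt G g <-> measurable_fun (setT : set OmegaG) g.
Proof.
split => [mg _ U mU|mg U mU]; first by rewrite setTI measurable_OmegaGE; exact: mg.
by rewrite -measurable_OmegaGE -[X in measurable X]setTI; exact: mg.
Qed.

Lemma cond_exp_ae_unique {X g1 g2 : Omega -> R} :
  is_cond_exp P G X g1 -> is_cond_exp P G X g2 ->
  ae_eq P setT (EFin \o g1) (EFin \o g2).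
Proof.
case=> /measurable_wrtE/measurable_EFinP m1 i1 e1.
case=> /measurable_wrtE/measurable_EFinP m2 i2 e2.
have : ae_eq PG setT (EFin \o g1 : OmegaG -> \bar R) (EFin \o g2).
  have iG1 : PG.-integrable setT (EFin \o g1) by exact: integrable_pushforward.
  apply: integral_ae_eq => //.
  move=> E _ mE.
  have GE : G E by rewrite -measurable_OmegaGE.
  have mEO := measurable_coarse mE.
  rewrite !integral_PG //; [|exact: integrableS measurableT mEO _ i2
                             |exact: integrableS measurableT mEO _ i1].
  by rewrite /= -(e1 _ GE) (e2 _ GE).
by case=> N [mN N0 sub]; exists N; split => //; exact: measurable_coarse.
Qed.

Lemma cond_exp_indic_set0 : is_cond_exp P G (\1_set0) (fun=> 0).
Proof.
have [G0 GC _] := G_sigma.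
split; last by move=> B _; rewrite indic0.
- move=> U _; have [U0|U0] := pselect (U 0).
    rewrite (_ : _ @^-1` U = setT); last by apply/seteqP; split.
    by rewrite -(setD0 setT); exact: GC.
  by rewrite (_ : _ @^-1` U = set0) //; apply/seteqP; split.
- exact: integrable0.
Qed.

Lemma cond_exp_indic_set0_ae {g : Omega -> R} :
  is_cond_exp P G (\1_set0) g -> ae_eq P setT (EFin \o g) (EFin \o cst 0).
Proof. by move=> g_set0; exact: cond_exp_ae_unique g_set0 cond_exp_indic_set0. Qed.

Lemma is_cond_exp_sandwich {G1 G3 : set (set Omega)} {X h g3 : Omega -> R} :
  G1 `<=` G -> G `<=` G3 ->
  is_cond_exp P G1 X h -> is_cond_exp P G3 X g3 ->
  ae_eq P setT (EFin \o g3) (EFin \o h) -> is_cond_exp P G X h.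
Proof.
move=> G1G GG3 [mh ih _] [_ i3 e3] g3h; split => //.
  by move=> U mU; apply: G1G; exact: mh.
move=> B GB; rewrite (e3 _ (GG3 _ GB)).
apply: ae_eq_integral => //.
- exact: G_measurable.
- exact: measurable_funTS (measurable_int _ i3).
- exact: measurable_funTS (measurable_int _ ih).
- by apply: filterS g3h => w + _; exact.
Qed.

Section indicator.
Context {A : set Omega} (mA : measurable A).

Definition trace_measure (B : set OmegaG) : \bar R := P (B `&` A).

Let trace_measure0 : trace_measure set0 = 0%E.
Proof. by rewrite /trace_measure set0I measure0. Qed.

Let trace_measure_ge0 B : (0 <= trace_measure B)%E.
Proof. exact: measure_ge0. Qed.

Let trace_measure_semi_sigma_additive : semi_sigma_additive trace_measure.
Proof.
move=> B mB tB mUB.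
exact: (@measure_semi_sigma_additive _ _ _ (mrestr P mA) B
  (fun i => measurable_coarse (mB i)) tB (measurable_coarse mUB)).
Qed.

HB.instance Definition _ := isMeasure.Build _ _ _ trace_measure
  trace_measure0 trace_measure_ge0 trace_measure_semi_sigma_additive.

Let trace_measure_fin : fin_num_fun trace_measure.
Proof.
move=> B mB; rewrite ge0_fin_numE//; apply: (@le_lt_trans _ _ (P setT)).
  by apply: le_measure; rewrite ?inE//; apply: measurableI => //;
    exact: measurable_coarse.
by rewrite probability_setT ltry.
Qed.

HB.instance Definition _ := @Measure_isFinite.Build _ OmegaG _ trace_measure
  trace_measure_fin.

Lemma cond_exp_indic_exists : exists g, is_cond_exp P G (\1_A) g.
Proof.
have trace_PG : trace_measure `<< PG.
  apply/null_content_dominatesP => B mB PB0.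
  apply/eqP; rewrite -measure_le0 -PB0; apply: le_measure; rewrite ?inE//.
    by apply: measurableI => //; exact: measurable_coarse.
  exact: measurable_coarse.
have [f [f_ge0 f_fin f_int f_density]] := radon_nikodym_sigma_finite trace_PG.
have Ef : EFin \o (fine \o f) = f by apply/funext => w /=; rewrite fineK.
have mf := measurable_int _ f_int.
have mfG : measurable_fun setT (f \o coarse_id) by exact: measurableT_comp.
exists (fine \o f); split.
- by apply/measurable_wrtE; exact: measurableT_comp.
- rewrite Ef; apply/integrableP; split => //.
  rewrite -ge0_integral_PG//; first by case/integrableP: f_int.
  exact: measurableT_comp.
- move=> B GB; have mB : measurable (B : set OmegaG) by rewrite measurable_OmegaGE.
  rewrite integral_indic //; last exact: measurable_coarse.
  rewrite -[fun w => _]/(EFin \o (fine \o f)) Ef.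
  by rewrite -ge0_integral_PG// -f_density// /trace_measure setIC.
Qed.

End indicator.
End conditional_expectation.

Lemma sigma_algebra_sigma_gen {Omega S : Type} {B : set (set S)} (Z : Omega -> S) :
  sigma_algebra setT B -> sigma_algebra setT (sigma_gen B Z).
Proof.
move=> B_sigma.
rewrite (_ : sigma_gen B Z = preimage_set_system setT Z B).
  exact: sigma_algebra_preimage.
apply/seteqP; split=> A [C BC AC]; exists C => //.
  by rewrite setTI AC.
by rewrite -AC setTI.
Qed.

Section randomized_stopping_times.
Context {d} {Omega : measurableType d} {R : realType} (P : probability Omega R).

Lemma sigma_algebra_filt_plus (F : R -> set (set Omega)) (t : R) :
  (forall s, t < s -> sigma_algebra setT (F s)) ->
  sigma_algebra setT (filt_plus F t).
Proof.
move=> Fs; split.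
- by move=> s ts; have [] := Fs s ts.
- by move=> B FB s ts; have [_ FC _] := Fs s ts; exact: FC (FB s ts).
- by move=> B FB s ts; have [_ _ FU] := Fs s ts; apply: FU => n; exact: FB.
Qed.

Lemma randomized_stopping_time_shift {SZ : set (set Omega)}
    {F : R -> set (set Omega)} {tau : Omega -> \bar R} {c : R} :
  sigma_algebra setT SZ -> SZ `<=` measurable -> filtration_in SZ F ->
  randomized_stopping_time P SZ (filt_plus F) tau -> 0 < c ->
  randomized_stopping_time P SZ F (fun w => tau w + c%:E)%E.
Proof.
move=> SZ_sigma SZ_meas [F_sigma [_ F_SZ]] [[mtau tau_ge0] tau_rst] c_gt0.
split.
  split; first by apply: emeasurable_funD => //; exact: measurable_cst.
  by move=> w; rewrite adde_ge0// lee_fin ltW.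
move=> t t_ge0 g1 g2 g1_SZ g2_Ft.
have Ft_meas : F t `<=` measurable by move=> A /(F_SZ _ t_ge0)/SZ_meas.
have [tc|ct] := ltP t c.
  have empty : [set w | tau w + c%:E <= t%:E]%E = set0.
    apply/seteqP; split => // w /= tauc_le.
    have : (c%:E <= t%:E)%E := le_trans (lee_paddl (tau_ge0 w) (lexx _)) tauc_le.
    by rewrite lee_fin leNgt tc.
  rewrite empty in g1_SZ g2_Ft.
  have g1_0 := cond_exp_indic_set0_ae P SZ_sigma SZ_meas g1_SZ.
  have g2_0 := cond_exp_indic_set0_ae P (F_sigma t t_ge0) Ft_meas g2_Ft.
  exact: ae_eq_trans g1_0 (ae_eq_sym g2_0).
have shift : [set w | tau w + c%:E <= t%:E]%E = [set w | tau w <= (t - c)%:E]%E.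
  by apply/seteqP; split => w /=; rewrite EFinB leeBrDr.
rewrite shift in g1_SZ g2_Ft.
have tc_ge0 : 0 <= t - c by rewrite subr_ge0.
have Fp_sigma : sigma_algebra setT (filt_plus F (t - c)).
  by apply: sigma_algebra_filt_plus => s /ltW/(le_trans tc_ge0)/F_sigma.
have Fp_meas : filt_plus F (t - c) `<=` measurable.
  by move=> B FB; apply/SZ_meas/(F_SZ (t - c + 1)); [lra | apply: FB; lra].
have Fp_Ft : filt_plus F (t - c) `<=` F t by move=> B; apply; lra.
have mA : measurable [set w | tau w <= (t - c)%:E]%E.
  by rewrite -[X in measurable X]setTI; apply: measurable_lee.
have [h h_Fp] := cond_exp_indic_exists P Fp_sigma Fp_meas mA.
have g1h := tau_rst _ tc_ge0 _ _ g1_SZ h_Fp.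
have h_Ft := is_cond_exp_sandwich P Ft_meas Fp_Ft (F_SZ t t_ge0) h_Fp g1_SZ g1h.
exact: ae_eq_trans g1h (cond_exp_ae_unique P (F_sigma t t_ge0) Ft_meas h_Ft g2_Ft).
Qed.

End randomized_stopping_times.

Lemma cvg_within_continuous {T U : topologicalType} {A : set T} {f : T -> U}
    {I : Type} {F : set_system I} {FF : Filter F} {u : I -> T} {x : T} :
  {within A, continuous f} -> A x -> (forall i, A (u i)) -> u @ F --> x ->
  (f \o u) @ F --> f x.
Proof.
move=> /subspace_continuousP f_cont Ax Au ux W /= /(f_cont x Ax)/ux.
exact: filterS (fun i (AW : A (u i) -> W (f (u i))) => AW (Au i)).
Qed.

Section measurability.
Context {d} {Omega : measurableType d} {R : realType} {S : topologicalType}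
  (Z : Omega -> S) (f : S * \bar R -> R).
Hypotheses (mZ : forall B, borel_sets S B -> measurable (Z @^-1` B))
  (f_cont : {within [set p : S * \bar R | (0 <= p.2)%E], continuous f}).

Lemma measurable_fun_slice (c : \bar R) : (0 <= c)%E ->
  measurable_fun setT (fun w => f (Z w, c)).
Proof.
move=> c_ge0.
have cont : continuous (fun s => f (s, c)).
  move=> s; apply: (cvg_within_continuous (u := fun s => (s, c)) f_cont) => //.
  exact: cvg_pair cvg_id (cvg_cst _).
apply: (measurability _ (RGenOpens.measurableE R)).
move=> _ [_ [a [b ->]] <-]; rewrite setTI.
apply: (mZ ((fun s => f (s, c)) @^-1` `]a, b[%classic)); apply: sub_sigma_algebra.
by move/continuousP: cont; apply; exact: interval_open.
Qed.

Import HBNNSimple.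

(* Approximating sg by simple functions reduces to the slices above. *)
Lemma measurable_fun_pair_comp (sg : Omega -> \bar R) :
  measurable_fun setT sg -> (forall w, (0 <= sg w)%E) ->
  measurable_fun setT (fun w => f (Z w, sg w)).
Proof.
move=> msg sg_ge0.
pose phi := nnsfun_approx measurableT msg.
apply: (@measurable_fun_cvg _ _ _ setT
  (fun k w => f (Z w, ((phi k : Omega -> R) w)%:E))).
- move=> k _ Y mY; rewrite setTI.
  have -> : (fun w => f (Z w, (phi k w)%:E)) @^-1` Y = \bigcup_(y in range (phi k))
      (phi k @^-1` [set y] `&` (fun w => f (Z w, y%:E)) @^-1` Y).
    apply/seteqP; split; first by move=> w /= Yw; exists (phi k w).
    by move=> w [_ [w' _ <-]] [/= -> ].
  apply: fin_bigcup_measurable; first exact: fimfunP.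
  move=> _ [w _ <-]; apply: measurableI.
    by rewrite -[X in measurable X]setTI; exact: measurable_funP1.
  rewrite -[X in measurable X]setTI; apply: measurable_fun_slice => //.
  by rewrite lee_fin fun_ge0.
- move=> w _.
  apply: (cvg_within_continuous (u := fun k => (Z w, (phi k w)%:E)) f_cont).
  + exact: sg_ge0.
  + by move=> k; rewrite /= lee_fin fun_ge0.
  + apply: cvg_pair (cvg_cst _) _.
    exact: (cvg_nnsfun_approx measurableT msg (fun w _ => sg_ge0 w)).
Qed.

End measurability.

Lemma cvge_addr_harmonic {R : realType} (x : \bar R) :
  (x + (harmonic n)%:E)%E @[n --> \oo] --> x.
Proof.
have x_def : (x +? 0)%E by exact: fin_num_adde_defl.
by have := cvgeD x_def (cvg_cst x) cvge_harmonic; rewrite adde0; exact.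
Qed.

Lemma cvg_law_pair_pointwise {d} {Omega : measurableType d} {R : realType}
    (P : probability Omega R) {S : topologicalType} (Z : Omega -> S)
    (taun : nat -> Omega -> \bar R) (tau : Omega -> \bar R) :
  (forall B, borel_sets S B -> measurable (Z @^-1` B)) ->
  random_time tau -> (forall n, random_time (taun n)) ->
  (forall w, taun n w @[n --> \oo] --> tau w) ->
  cvg_law_pair P Z taun tau.
Proof.
move=> mZ [mtau tau_ge0] taun_rt taun_cvg f f_cont [M f_bound].
have mfn n : measurable_fun setT (fun w => f (Z w, taun n w)).
  by have [mtaun taun_ge0] := taun_rt n; exact: measurable_fun_pair_comp.
have M_int : P.-integrable setT (EFin \o cst M).
  exact: finite_measure_integrable_cst.
have f_int : P.-integrable setT (fun w => (f (Z w, tau w))%:E).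
  apply: le_integrable M_int => //.
    exact/measurable_EFinP/measurable_fun_pair_comp.
  move=> w _; rewrite /= lee_fin.
  by rewrite (le_trans (f_bound (Z w, tau w) (tau_ge0 w))) ?ler_norm.
have f_cvg w : f (Z w, taun n w) @[n --> \oo] --> f (Z w, tau w).
  apply: (cvg_within_continuous (u := fun n => (Z w, taun n w)) f_cont).
  - exact: tau_ge0.
  - by move=> n; exact: (taun_rt n).2.
  - by apply: cvg_pair; [exact: cvg_cst | exact: taun_cvg].
rewrite /Rintegral; apply: fine_cvg; rewrite fineK; last exact: integrable_fin_num.
apply: (dominated_cvg measurableT _ _ _ M_int) => //.
- by move=> n; exact/measurable_EFinP.
- by move=> w _; apply: cvg_comp (f_cvg w) _; exact: cvg_id.
- by move=> n w _; rewrite /= lee_fin f_bound //; exact: (taun_rt n).2.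
Qed.

Theorem lemma4p6 (R : realType) (d : measure_display) (Omega : measurableType d)
  (P : probability Omega R) (S : completePseudoMetricType R)
  (Z : Omega -> S) (F : R -> set (set Omega)) (tau : Omega -> \bar R) :
  polish_space S ->
  (forall B, borel_sets S B -> measurable (Z @^-1` B)) ->
  filtration_in (sigma_gen (borel_sets S) Z) F ->
  randomized_stopping_time P (sigma_gen (borel_sets S) Z) (filt_plus F) tau ->
  exists taun : nat -> Omega -> \bar R,
    (forall n, randomized_stopping_time P (sigma_gen (borel_sets S) Z) F (taun n)) /\
    cvg_law_pair P Z taun tau.
Proof.
move=> _ mZ F_filt tau_rst.
have SZ_sigma : sigma_algebra setT (sigma_gen (borel_sets S) Z).
  exact/sigma_algebra_sigma_gen/smallest_sigma_algebra.
have SZ_meas : sigma_gen (borel_sets S) Z `<=` measurable.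
  by move=> B [C BC ->]; exact: mZ.
have taun_rst n : randomized_stopping_time P (sigma_gen (borel_sets S) Z) F
    (fun w => tau w + (harmonic n)%:E)%E.
  by have := randomized_stopping_time_shift P SZ_sigma SZ_meas F_filt tau_rst
    (harmonic_gt0 n).
exists (fun n w => tau w + (harmonic n)%:E)%E; split => //.
apply: cvg_law_pair_pointwise mZ tau_rst.1 (fun n => (taun_rst n).1) _ => w.
exact: cvge_addr_harmonic.
Qed.
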